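(* Let $n,m\ge1$, $a\in\mathbb{R}^n$, $d\in\mathbb{R}^m$ with $\|a\|=1\ge\|d\|$, $S_{\le0}=\{(x,y)\in\mathbb{R}^{n+m}:\|x\|\le\|y\|,\ a^\mathsf{T} x+d^\mathsf{T} y\le0\}$, $\lambda\in\mathbb{R}^n$ with $\|\lambda\|=1$, and $\phi_\lambda(y)=\max_x\{\lambda^\mathsf{T} x:(x,y)\in S_{\le0}\}$ for $y\in\mathbb{R}^m$. Then $C^\phi_\lambda=\{(x,y)\in\mathbb{R}^{n+m}:\phi_\lambda(y)\le\lambda^\mathsf{T} x\}$ is maximal $S_{\le0}$-free. Additionally, if $(\bar x,\bar y)\notin S_{\le0}$ satisfies $a^\mathsf{T}\bar x+d^\mathsf{T}\bar y\le0$ and $\lambda=\bar x/\|\bar x\|$, then $(\bar x,\bar y)\in\operatorname{int}(C^\phi_\lambda)$.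
   Context: $\|\cdot\|$ is the Euclidean norm. A convex set $C$ is $S$-free if $\operatorname{int}(C)\cap S=\emptyset$, and maximal $S$-free if it is $S$-free and no $S$-free convex set strictly contains it. *)

From HB Require Import structures.
From mathcomp Require Import all_boot all_order all_algebra.
From mathcomp Require Import all_classical all_reals all_analysis.
Set Implicit Arguments. Unset Strict Implicit. Unset Printing Implicit Defensive.
Import Order.TTheory GRing.Theory Num.Theory.
Import numFieldNormedType.Exports.
Local Open Scope classical_set_scope.
Local Open Scope ring_scope.

Definition dotv (R : realType) (k : nat) (u v : 'rV[R]_k) : R :=
  \sum_(i < k) u ord0 i * v ord0 i.
Definition enorm (R : realType) (k : nat) (u : 'rV[R]_k) : R :=
  Num.sqrt (dotv u u).

Definition Sle0 (R : realType) (n m : nat) (a : 'rV[R]_n) (d : 'rV[R]_m)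
  : set ('rV[R]_n * 'rV[R]_m) :=
  [set p | enorm p.1 <= enorm p.2 /\ dotv a p.1 + dotv d p.2 <= 0].

(* phi_lambda(y) = max { lambda^T x : (x,y) in S_{<=0} }  (the set is nonempty
   and compact, so the supremum is attained and equals the maximum). *)
Definition phi (R : realType) (n m : nat) (a : 'rV[R]_n) (d : 'rV[R]_m)
  (lam : 'rV[R]_n) (y : 'rV[R]_m) : R :=
  sup [set dotv lam x | x in [set x | Sle0 a d (x, y)]].

Definition Cphi (R : realType) (n m : nat) (a : 'rV[R]_n) (d : 'rV[R]_m)
  (lam : 'rV[R]_n) : set ('rV[R]_n * 'rV[R]_m) :=
  [set p | phi a d lam p.2 <= dotv lam p.1].

Definition Sfree (R : realType) (n m : nat) (S C : set ('rV[R]_n * 'rV[R]_m)) :=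
  convex_set (C : set (convex_lmodType ('rV[R]_n * 'rV[R]_m)%type))
  /\ interior C `&` S = set0.

Definition maxSfree (R : realType) (n m : nat) (S C : set ('rV[R]_n * 'rV[R]_m)) :=
  Sfree S C /\ forall C', Sfree S C' -> C `<=` C' -> C' = C.

(* Write [lam = c a + w] with [w] orthogonal to [a] and [|w| = sg = sqrt (1 - c^2)].
   For fixed [y], with [t = - d^T y] and [r = |y|], the constraints only see
   [a^T x] and [w^T x], so [phi_lam y] is the maximum of [(c, sg) . z] over the
   disc [|z| <= r] cut by [z_1 <= t].  In the plane this value is also the maximum
   of [g t + s q(y)] over the unit vectors [(g, s)] with [s >= 0] and [g >= c],
   where [q(y) = sqrt (|y|^2 - (d^T y)^2)] is a seminorm because [|d| <= 1]; hence
   [phi_lam] is convex.  As [phi_lam y <= |y|], the open cone [|y| < lam^T x] lies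
   in [int C].  A point [(x, y)] of [S] has [lam^T x <= phi_lam y], so it is not
   interior to [C].  If a convex [S]-free [C'] contains [C] and a point [p] outside
   [C], a point of [S] attaining [phi_lam] lies strictly between [p] and a point of
   the cone, hence in [int C']. *)

From HB Require Import structures.
From mathcomp Require Import all_boot all_order all_algebra.
From mathcomp Require Import all_classical all_reals all_analysis.
From mathcomp Require Import ring lra.
Set Implicit Arguments. Unset Strict Implicit. Unset Printing Implicit Defensive.
Import Order.TTheory GRing.Theory Num.Theory.
Import numFieldNormedType.Exports.
Local Open Scope classical_set_scope.
Local Open Scope ring_scope.

Lemma le_of_sqr_le (R : realDomainType) (x y : R) : x ^+ 2 <= y ^+ 2 -> 0 <= y -> x <= y.
Proof. move=> h y0; have [x0|x0] := lerP x 0; [exact: le_trans x0 y0|nra]. Qed.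

Lemma quadratic_ge0_discr (R : realFieldType) (A B C : R) : 0 <= C ->
  (forall x, 0 <= A + 2 * x * B + x ^+ 2 * C) -> B ^+ 2 <= A * C.
Proof.
move=> C_ge0 h; have A_ge0 : 0 <= A by have := h 0; rewrite mulr0 mul0r expr0n /= mul0r !addr0.
have [C_gt0|C_le0] := ltrP 0 C.
  have := h (- B / C).
  have -> : A + 2 * (- B / C) * B + (- B / C) ^+ 2 * C = A - B ^+ 2 / C.
    by field; rewrite gt_eqF.
  by rewrite subr_ge0 ler_pdivrMr.
have C0 : C = 0 by apply/eqP; rewrite eq_le C_le0 C_ge0.
have [B0|B_neq0] := eqVneq B 0; first by rewrite B0 expr0n /= C0 mulr0.
have := h (- (A + 1) / (2 * B)).
have -> : A + 2 * (- (A + 1) / (2 * B)) * B + (- (A + 1) / (2 * B)) ^+ 2 * C = -1.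
  by rewrite C0; field; rewrite B_neq0.
by rewrite ler0N1.
Qed.

Lemma dot2_le_radius (R : realFieldType) (u v x y r : R) :
  u ^+ 2 + v ^+ 2 = 1 -> x ^+ 2 + y ^+ 2 <= r ^+ 2 -> 0 <= r -> u * x + v * y <= r.
Proof.
move=> huv hxy hr; apply: le_of_sqr_le => //.
have : (u * x + v * y) ^+ 2 + (u * y - v * x) ^+ 2 = x ^+ 2 + y ^+ 2.
  by rewrite -[RHS]mul1r -huv; ring.
have := sqr_ge0 (u * y - v * x); lra.
Qed.

Lemma unit_cross_ge0 (R : realFieldType) (c sg t q r : R) :
  c ^+ 2 + sg ^+ 2 = 1 -> 0 <= sg -> t ^+ 2 + q ^+ 2 = r ^+ 2 -> 0 <= q -> 0 <= r ->
  t <= c * r -> sg * t <= c * q.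
Proof.
move=> hc hsg ht hq hr htc.
set P := c * t + sg * q; set Q := c * q - sg * t.
have hPQ : P ^+ 2 + Q ^+ 2 = r ^+ 2 by rewrite -ht -[RHS]mul1r -hc /P /Q; ring.
have tE : t = c * P - sg * Q by rewrite -[LHS]mul1r -hc /P /Q; ring.
have qE : q = sg * P + c * Q by rewrite -[LHS]mul1r -hc /P /Q; ring.
rewrite -subr_ge0 -/Q leNgt; apply/negP => Q_lt0.
have P_lt_r : P < r by nra.
have : sg * r * (r - P) <= 0 by nra.
rewrite pmulr_lle0 ?subr_gt0 // => sr_le0.
have /eqP : sg * r = 0 by apply/eqP; rewrite eq_le sr_le0 mulr_ge0.
rewrite mulf_eq0 => /orP[/eqP sg0|/eqP r0]; last by rewrite r0 in hPQ; nra.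
rewrite sg0 mul0r add0r in qE; rewrite sg0 mul0r subr0 in tE.
have cN1 : c = -1 by rewrite sg0 in hc; nra.
rewrite cN1 in tE htc; lra.
Qed.

Lemma circle_dot_mono (R : realFieldType) (u v x1 y1 x2 y2 : R) :
  0 <= y1 -> 0 <= y2 -> x1 ^+ 2 + y1 ^+ 2 = x2 ^+ 2 + y2 ^+ 2 -> x1 <= x2 ->
  v * x1 <= u * y1 -> v * x2 <= u * y2 -> (0 < x2 -> 0 <= u) ->
  u * x1 + v * y1 <= u * x2 + v * y2.
Proof.
move=> hy1 hy2 hxy hx cr1 cr2 hu.
have key : (y1 + y2) * ((u * x2 + v * y2) - (u * x1 + v * y1)) =
           (x2 - x1) * ((u * y1 - v * x1) + (u * y2 - v * x2)).
  apply/eqP; rewrite -subr_eq0; apply/eqP.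
  transitivity (v * ((x2 ^+ 2 + y2 ^+ 2) - (x1 ^+ 2 + y1 ^+ 2))); first ring.
  by rewrite hxy subrr mulr0.
rewrite -subr_ge0.
have [y_gt0|y_le0] := ltrP 0 (y1 + y2).
  rewrite -(pmulr_rge0 _ y_gt0) key; apply: mulr_ge0; lra.
have y10 : y1 = 0 by lra.
have y20 : y2 = 0 by lra.
rewrite y10 y20 in hxy *.
have [x2_gt0|x2_le0] := ltrP 0 x2.
  have : 0 <= x2 - x1 by rewrite subr_ge0.
  move=> /(mulr_ge0 (hu x2_gt0)); lra.
have -> : x1 = x2 by nra.
lra.
Qed.

(* The maximum of [c * al + sg * be] over the disc [al^2 + be^2 <= r^2] cut by
   [al <= t]: the boundary point above [t] if it lies beyond the direction
   [(c, sg)], the unconstrained maximum [r] otherwise. *)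
Definition cut_disc_max (R : rcfType) (c sg t r : R) : R :=
  if t <= c * r then c * t + sg * Num.sqrt (r ^+ 2 - t ^+ 2) else r.

Section CutDisc.
Variables (R : rcfType) (c sg t r : R).
Hypotheses (csg1 : c ^+ 2 + sg ^+ 2 = 1) (sg_ge0 : 0 <= sg).
Hypotheses (r_ge0 : 0 <= r) (tr : t ^+ 2 <= r ^+ 2).

Let q := Num.sqrt (r ^+ 2 - t ^+ 2).
Let q_ge0 : 0 <= q. Proof. exact: sqrtr_ge0. Qed.
Let tq : t ^+ 2 + q ^+ 2 = r ^+ 2.
Proof. by rewrite sqr_sqrtr ?subr_ge0 // addrC subrK. Qed.

Lemma cut_disc_max_ub al be : al <= t -> al ^+ 2 + be ^+ 2 <= r ^+ 2 ->
  c * al + sg * be <= cut_disc_max c sg t r.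
Proof.
move=> al_t hab; rewrite /cut_disc_max -/q; case: ifP => [t_cr|_]; last first.
  exact: dot2_le_radius.
set p := Num.sqrt (r ^+ 2 - al ^+ 2).
have p_ge0 : 0 <= p by exact: sqrtr_ge0.
have ap : al ^+ 2 + p ^+ 2 = r ^+ 2.
  rewrite sqr_sqrtr; first by rewrite addrC subrK.
  by rewrite subr_ge0; have := sqr_ge0 be; lra.
have be_p : be <= p by apply: le_of_sqr_le => //; lra.
apply: le_trans (_ : c * al + sg * p <= _); first by rewrite lerD2l ler_wpM2l.
apply: circle_dot_mono => //; first by rewrite ap tq.
- by apply: unit_cross_ge0 ap _ _ _ => //; exact: le_trans t_cr.
- exact: unit_cross_ge0 tq _ _ _.
- move=> t_gt0; rewrite leNgt; apply/negP => c_lt0.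
  have : c * r <= 0 by rewrite mulr_le0_ge0 // ltW.
  lra.
Qed.

Lemma cut_disc_max_attained : exists al be,
  [/\ al <= t, al ^+ 2 + be ^+ 2 <= r ^+ 2 & c * al + sg * be = cut_disc_max c sg t r].
Proof.
rewrite /cut_disc_max -/q; case: ifP => [_|/negbT]; first by exists t, q; rewrite tq.
rewrite -ltNge => cr_t; exists (c * r), (sg * r); split; first exact: ltW.
  have -> : (c * r) ^+ 2 + (sg * r) ^+ 2 = (c ^+ 2 + sg ^+ 2) * r ^+ 2 by ring.
  by rewrite csg1 mul1r.
by rewrite -[RHS]mul1r -csg1; ring.
Qed.

Lemma cut_disc_max_arc_lb g s : g ^+ 2 + s ^+ 2 = 1 -> 0 <= s -> c <= g ->
  g * t + s * q <= cut_disc_max c sg t r.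
Proof.
move=> gs1 s_ge0 cg; rewrite /cut_disc_max -/q; case: ifP => [t_cr|_]; last first.
  by apply: dot2_le_radius => //; rewrite tq.
suff : - t * - g + q * s <= - t * - c + q * sg.
  by rewrite !mulrNN ![t * _]mulrC ![q * _]mulrC.
apply: circle_dot_mono => //.
- by rewrite !sqrrN gs1 csg1.
- by rewrite lerN2.
- rewrite mulrN mulNr lerN2 (mulrC t) (mulrC q); apply: unit_cross_ge0 tq _ _ _ => //.
  by apply: le_trans t_cr _; rewrite ler_wpM2r.
- by rewrite mulrN mulNr lerN2 (mulrC t) (mulrC q); apply: unit_cross_ge0 tq _ _ _.
- rewrite oppr_gt0 oppr_ge0 => c_lt0; apply: le_trans t_cr _.
  by rewrite mulr_le0_ge0 // ltW.
Qed.

Lemma cut_disc_max_arc_attained : exists g s,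
  [/\ g ^+ 2 + s ^+ 2 = 1, 0 <= s, c <= g & g * t + s * q = cut_disc_max c sg t r].
Proof.
rewrite /cut_disc_max -/q; case: ifP => [_|/negbT]; first by exists c, sg.
rewrite -ltNge => cr_t.
have r_gt0 : 0 < r.
  rewrite lt_neqAle r_ge0 andbT; apply/eqP => r0.
  rewrite -r0 mulr0 in cr_t; have := tr; rewrite -r0 expr0n /= => t_le0.
  by have := exprn_gt0 2 cr_t; rewrite ltNge t_le0.
exists (t / r), (q / r); split.
- by rewrite !expr_div_n -mulrDl tq divff // expf_neq0 // gt_eqF.
- exact: divr_ge0.
- by rewrite ler_pdivlMr // ltW.
- have -> : t / r * t + q / r * q = (t ^+ 2 + q ^+ 2) / r by ring.
  by rewrite tq expr2 mulrK // unitfE gt_eqF.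
Qed.

Lemma cut_disc_max_le : cut_disc_max c sg t r <= r.
Proof.
have [al [be [_ hab <-]]] := cut_disc_max_attained.
exact: dot2_le_radius.
Qed.

End CutDisc.

Section DotProduct.
Variables (R : realType) (k : nat).
Implicit Types u v w : 'rV[R]_k.

Lemma dotvC u v : dotv u v = dotv v u.
Proof. by apply: eq_bigr => i _; rewrite mulrC. Qed.

Lemma dotvDl u v w : dotv (u + v) w = dotv u w + dotv v w.
Proof. by rewrite /dotv -big_split; apply: eq_bigr => i _; rewrite !mxE mulrDl. Qed.

Lemma dotvZl c u v : dotv (c *: u) v = c * dotv u v.
Proof. by rewrite /dotv mulr_sumr; apply: eq_bigr => i _; rewrite !mxE mulrA. Qed.

Lemma dotvBl u v w : dotv (u - v) w = dotv u w - dotv v w.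
Proof. by rewrite dotvDl -scaleN1r dotvZl mulN1r. Qed.

Lemma dotvDr u v w : dotv w (u + v) = dotv w u + dotv w v.
Proof. by rewrite dotvC dotvDl !(dotvC w). Qed.

Lemma dotvZr c u v : dotv v (c *: u) = c * dotv v u.
Proof. by rewrite dotvC dotvZl dotvC. Qed.

Lemma dotvBr u v w : dotv w (u - v) = dotv w u - dotv w v.
Proof. by rewrite dotvC dotvBl !(dotvC w). Qed.

Lemma dotvv_ge0 u : 0 <= dotv u u.
Proof. by apply: sumr_ge0 => i _; rewrite -expr2 sqr_ge0. Qed.

Lemma enorm_ge0 u : 0 <= enorm u.
Proof. exact: sqrtr_ge0. Qed.

Lemma sqr_enorm u : enorm u ^+ 2 = dotv u u.
Proof. by rewrite sqr_sqrtr // dotvv_ge0. Qed.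

Lemma dotv_sqr_le u v : dotv u v ^+ 2 <= dotv u u * dotv v v.
Proof.
apply: quadratic_ge0_discr => [|x]; first exact: dotvv_ge0.
suff <- : dotv (u + x *: v) (u + x *: v) = dotv u u + 2 * x * dotv u v + x ^+ 2 * dotv v v.
  exact: dotvv_ge0.
by rewrite !(dotvDl, dotvDr, dotvZl, dotvZr) (dotvC v u); ring.
Qed.

Lemma dotv_le_enorm u v : dotv u v <= enorm u * enorm v.
Proof.
apply: le_of_sqr_le; last exact: mulr_ge0 (enorm_ge0 _) (enorm_ge0 _).
by rewrite exprMn !sqr_enorm dotv_sqr_le.
Qed.

End DotProduct.

Definition enorm_perp (R : realType) (k : nat) (d u : 'rV[R]_k) : R :=
  Num.sqrt (dotv u u - dotv d u ^+ 2).

Section PerpSeminorm.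
Variables (R : realType) (k : nat) (d : 'rV[R]_k).
Hypothesis dd_le1 : dotv d d <= 1.
Implicit Types u v : 'rV[R]_k.

Let perp_form u v := dotv u v - dotv d u * dotv d v.

Let perp_form_ge0 u : 0 <= perp_form u u.
Proof.
rewrite subr_ge0 -expr2; apply: le_trans (dotv_sqr_le d u) _.
by rewrite ler_piMl ?dotvv_ge0.
Qed.

Let sqr_enorm_perp u : enorm_perp d u ^+ 2 = perp_form u u.
Proof. by have := perp_form_ge0 u; rewrite /perp_form -expr2; exact: sqr_sqrtr. Qed.

Lemma enorm_perp_ge0 u : 0 <= enorm_perp d u.
Proof. exact: sqrtr_ge0. Qed.

Lemma enorm_perpZ c u : enorm_perp d (c *: u) = `|c| * enorm_perp d u.
Proof.
rewrite /enorm_perp dotvZl !dotvZr.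
have -> : c * (c * dotv u u) - (c * dotv d u) ^+ 2 = c ^+ 2 * (dotv u u - dotv d u ^+ 2).
  by ring.
by rewrite sqrtrM ?sqr_ge0 // sqrtr_sqr.
Qed.

Let perp_form_le u v : perp_form u v <= enorm_perp d u * enorm_perp d v.
Proof.
apply: le_of_sqr_le; last exact: mulr_ge0 (enorm_perp_ge0 _) (enorm_perp_ge0 _).
rewrite exprMn !sqr_enorm_perp; apply: quadratic_ge0_discr => [|x].
  exact: perp_form_ge0.
suff <- : perp_form (u + x *: v) (u + x *: v) =
    perp_form u u + 2 * x * perp_form u v + x ^+ 2 * perp_form v v.
  exact: perp_form_ge0.
by rewrite /perp_form !(dotvDl, dotvDr, dotvZl, dotvZr) (dotvC v u); ring.
Qed.

Lemma enorm_perpD u v : enorm_perp d (u + v) <= enorm_perp d u + enorm_perp d v.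
Proof.
have cs := perp_form_le u v.
apply: le_of_sqr_le; last exact: addr_ge0 (enorm_perp_ge0 _) (enorm_perp_ge0 _).
rewrite sqrrD !sqr_enorm_perp.
have -> : perp_form (u + v) (u + v) = perp_form u u + 2 * perp_form u v + perp_form v v.
  by rewrite /perp_form !(dotvDl, dotvDr) (dotvC v u); ring.
lra.
Qed.

End PerpSeminorm.

Lemma sup_ubound_mem (R : realType) (E : set R) x : E x -> ubound E x -> sup E = x.
Proof.
move=> Ex ubx; apply/le_anti/andP; split; first by apply: ge_sup => //; exists x.
by apply: ub_le_sup => //; exists x.
Qed.

Section Phi.
Variables (R : realType) (n m : nat) (a : 'rV[R]_n) (d : 'rV[R]_m) (lam : 'rV[R]_n).
Hypotheses (ha : enorm a = 1) (hd : enorm d <= 1) (hlam : enorm lam = 1).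

Let c := dotv lam a.
Let sg := Num.sqrt (1 - c ^+ 2).
Let w := lam - c *: a.

Let dotv_aa : dotv a a = 1. Proof. by rewrite -sqr_enorm ha expr1n. Qed.
Let dotv_ll : dotv lam lam = 1. Proof. by rewrite -sqr_enorm hlam expr1n. Qed.
Let dotv_dd : dotv d d <= 1.
Proof. by rewrite -sqr_enorm -(expr1n _ 2) ler_sqr ?nnegrE ?enorm_ge0. Qed.

Let csg1 : c ^+ 2 + sg ^+ 2 = 1.
Proof.
have c2_le1 : c ^+ 2 <= 1 by have := dotv_sqr_le lam a; rewrite dotv_aa dotv_ll mulr1.
by rewrite sqr_sqrtr ?subr_ge0 // addrC subrK.
Qed.

Let sg_ge0 : 0 <= sg. Proof. exact: sqrtr_ge0. Qed.
Let dotv_aw : dotv a w = 0.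
Proof. by rewrite dotvBr dotvZr dotv_aa mulr1 dotvC subrr. Qed.
Let dotv_lw : dotv lam w = sg ^+ 2.
Proof. by rewrite dotvBr dotvZr dotv_ll -/c -[X in _ = X]subr0 -csg1; ring. Qed.
Let dotv_ww : dotv w w = sg ^+ 2.
Proof. by rewrite {1}/w dotvBl dotvZl dotv_aw mulr0 subr0 dotv_lw. Qed.

Lemma plane_point al be : exists x,
  [/\ dotv a x = al, dotv lam x = c * al + sg * be & dotv x x <= al ^+ 2 + be ^+ 2].
Proof.
set k := be / sg; exists (al *: a + k *: w).
have [ksg ksg2] : k * sg ^+ 2 = sg * be /\ k ^+ 2 * sg ^+ 2 <= be ^+ 2.
  rewrite /k; have [->|sg_neq0] := eqVneq sg 0.
    by rewrite expr0n /= !mulr0 mul0r sqr_ge0.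
  by split; [field | rewrite le_eqVlt; apply/orP; left; apply/eqP; field].
split.
- by rewrite dotvDr !dotvZr dotv_aa dotv_aw; ring.
- by rewrite dotvDr !dotvZr dotv_lw -/c ksg; ring.
- rewrite dotvDl 2!dotvDr !dotvZl !dotvZr dotv_aa (dotvC w a) dotv_aw dotv_ww.
  set lhs := (X in X <= _); have -> : lhs = al ^+ 2 + k ^+ 2 * sg ^+ 2 by rewrite /lhs; ring.
  by rewrite lerD2l.
Qed.

Lemma plane_bound x : dotv lam x <= c * dotv a x + sg * Num.sqrt (dotv x x - dotv a x ^+ 2).
Proof.
set x' := x - dotv a x *: a.
have lamx : dotv lam x = c * dotv a x + dotv w x.
  by rewrite /w dotvBl dotvZl addrC subrK.
have wx : dotv w x = dotv w x' by rewrite dotvBr dotvZr (dotvC w a) dotv_aw mulr0 subr0.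
have x'x' : dotv x' x' = dotv x x - dotv a x ^+ 2.
  by rewrite !(dotvBl, dotvBr, dotvZl, dotvZr) dotv_aa (dotvC x a); ring.
have enorm_w : enorm w = sg by rewrite /enorm dotv_ww sqrtr_sqr ger0_norm.
rewrite lamx lerD2l wx -x'x' -enorm_w; exact: dotv_le_enorm.
Qed.

Let slice_tr y : (- dotv d y) ^+ 2 <= enorm y ^+ 2.
Proof.
rewrite sqrrN sqr_enorm; apply: le_trans (dotv_sqr_le d y) _.
by rewrite ler_piMl ?dotvv_ge0.
Qed.

Section Slice.
Variable y : 'rV[R]_m.

Let t := - dotv d y.
Let r := enorm y.
Let tr : t ^+ 2 <= r ^+ 2. Proof. exact: slice_tr. Qed.
Let r_ge0 : 0 <= r. Proof. exact: enorm_ge0. Qed.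

Lemma Sle0_dotv_le x : Sle0 a d (x, y) -> dotv lam x <= cut_disc_max c sg t r.
Proof.
case=> /= xr axy; apply: le_trans (plane_bound x) _.
apply: cut_disc_max_ub => //; first by rewrite /t; lra.
have ax2 : dotv a x ^+ 2 <= dotv x x.
  by have := dotv_sqr_le a x; rewrite dotv_aa mul1r.
by rewrite sqr_sqrtr ?subr_ge0 // addrC subrK -sqr_enorm ler_sqr ?nnegrE ?enorm_ge0.
Qed.

Lemma Sle0_attains : exists x, Sle0 a d (x, y) /\ dotv lam x = cut_disc_max c sg t r.
Proof.
have [al [be [al_t hab <-]]] := cut_disc_max_attained csg1 tr.
have [x [ax lx xx]] := plane_point al be.
exists x; split => //; split => /=.
  by rewrite -/r -(ler_sqr (enorm_ge0 _) r_ge0) sqr_enorm (le_trans xx).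
by rewrite ax; move: al_t; rewrite /t; lra.
Qed.

Lemma phi_cut_disc : phi a d lam y = cut_disc_max c sg t r.
Proof.
have [x [Sx lamx]] := Sle0_attains.
apply: sup_ubound_mem; first by exists x.
by move=> _ [x' Sx' <-]; exact: Sle0_dotv_le.
Qed.

End Slice.

Lemma phi_attained y : exists x, Sle0 a d (x, y) /\ dotv lam x = phi a d lam y.
Proof. by rewrite phi_cut_disc; exact: Sle0_attains. Qed.

Lemma phi_ge x y : Sle0 a d (x, y) -> dotv lam x <= phi a d lam y.
Proof. by rewrite phi_cut_disc; exact: Sle0_dotv_le. Qed.

Lemma phi_le_enorm y : phi a d lam y <= enorm y.
Proof. by rewrite phi_cut_disc; exact: cut_disc_max_le (enorm_ge0 _) (slice_tr _). Qed.

Lemma phi_convex k y1 y2 : 0 <= k -> k <= 1 ->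
  phi a d lam (k *: y1 + (1 - k) *: y2) <= k * phi a d lam y1 + (1 - k) * phi a d lam y2.
Proof.
move=> k_ge0 k_le1; have k'_ge0 : 0 <= 1 - k by rewrite subr_ge0.
set y := k *: y1 + (1 - k) *: y2; rewrite !phi_cut_disc.
have perpE z : Num.sqrt (enorm z ^+ 2 - (- dotv d z) ^+ 2) = enorm_perp d z.
  by rewrite sqrrN sqr_enorm.
have [g [s [gs1 s_ge0 cg <-]]] :=
  cut_disc_max_arc_attained csg1 sg_ge0 (enorm_ge0 y) (slice_tr y).
have lb z := cut_disc_max_arc_lb csg1 sg_ge0 (enorm_ge0 z) (slice_tr z) gs1 s_ge0 cg.
have lb1 := ler_wpM2l k_ge0 (lb y1); have lb2 := ler_wpM2l k'_ge0 (lb y2).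
rewrite !perpE in lb1 lb2 *.
have t_lin : - dotv d y = k * - dotv d y1 + (1 - k) * - dotv d y2.
  by rewrite dotvDr !dotvZr; ring.
have q_conv : enorm_perp d y <= k * enorm_perp d y1 + (1 - k) * enorm_perp d y2.
  apply: le_trans (enorm_perpD dotv_dd _ _) _.
  by rewrite !enorm_perpZ !ger0_norm.
have := ler_wpM2l s_ge0 q_conv; rewrite t_lin; lra.
Qed.

End Phi.

Lemma continuous_dotv (R : realType) (T : topologicalType) k (f g : T -> 'rV[R]_k) :
  continuous f -> continuous g -> continuous (fun z => dotv (f z) (g z)).
Proof.
move=> cf cg; rewrite [X in continuous X](_ : _ = \sum_(i < k) (fun z => f z 0 i * g z 0 i)).
  apply: (big_ind (fun h : T -> R => continuous h)).
  - exact: cst_continuous.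
  - by move=> h1 h2 c1 c2 z; apply: continuousD; [exact: c1 | exact: c2].
  - move=> i _ z; have coord := @coord_continuous R 1 k 0 i.
    apply: continuousM; [exact: (continuous_comp (cf z) (coord _)) |
                         exact: (continuous_comp (cg z) (coord _))].
by rewrite fct_sumE.
Qed.

Lemma enorm_continuous (R : realType) k : continuous (@enorm R k).
Proof.
have id_cont : continuous (@id 'rV[R]_k) by move=> ?; exact: cvg_id.
move=> v; apply: continuous_comp; [exact: continuous_dotv | exact: sqrt_continuous].
Qed.

Lemma open_enorm_lt_dotv (R : realType) n m (u : 'rV[R]_n) :
  open [set p : 'rV[R]_n * 'rV[R]_m | enorm p.2 < dotv u p.1].
Proof.
rewrite [X in open X](_ : _ = (fun p => dotv u p.1 - enorm p.2) @^-1` [set x | 0 < x]).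
  apply: open_comp; last exact: open_gt.
  move=> p _; apply: (@continuousB _ _ _ (fun p => dotv u p.1) (fun p => enorm p.2)).
    by apply: (continuous_dotv (f := cst u)); [exact: cst_continuous | move=> q; exact: cvg_fst].
  by apply: (continuous_comp (f := snd)); [exact: cvg_snd | exact: enorm_continuous].
by apply/seteqP; split => p /=; rewrite subr_gt0.
Qed.

Lemma interior_convex_comb (R : realType) (E : normedModType R) (C : set E) (p c : E) (s : R) :
  convex_set (C : set (convex_lmodType E)) -> C p -> interior C c -> 0 < s -> s <= 1 ->
  interior C (s *: c + (1 - s) *: p).
Proof.
move=> convC Cp Cc s_gt0 s_le1.
pose h z := s^-1 *: (z - (1 - s) *: p).
have h_cont : continuous h.
  by move=> z; apply: cvgZ; [exact: cvg_cst | apply: cvgB; [exact: cvg_id | exact: cvg_cst]].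
have hE : h (s *: c + (1 - s) *: p) = c by rewrite /h addrK scalerA mulVf ?gt_eqF // scale1r.
have Ch : nbhs (h (s *: c + (1 - s) *: p)) C by rewrite hE.
have near_C : nbhs (s *: c + (1 - s) *: p) (h @^-1` C) := h_cont _ C Ch.
apply: filterS near_C => z Chz.
have -> : z = s *: h z + (1 - s) *: p by rewrite /h scalerA mulfV ?gt_eqF // scale1r subrK.
by have := convC (h z) p (Itv01 (ltW s_gt0) s_le1); rewrite !inE; apply.
Qed.

Section MaximalSfree.
Variables (R : realType) (n m : nat) (a : 'rV[R]_n) (d : 'rV[R]_m) (lam : 'rV[R]_n).
Hypotheses (ha : enorm a = 1) (hd : enorm d <= 1) (hlam : enorm lam = 1).

Lemma Cphi_convex : convex_set (Cphi a d lam : set (convex_lmodType ('rV[R]_n * 'rV[R]_m)%type)).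
Proof.
move=> p q l; rewrite !inE => Cp Cq.
change (phi a d lam (l%:num *: p.2 + (1 - l%:num) *: q.2) <=
        dotv lam (l%:num *: p.1 + (1 - l%:num) *: q.1)).
apply: le_trans (phi_convex ha hd hlam _ _ (ge0 l) (le1 l)) _.
by rewrite dotvDr !dotvZr; apply: lerD; apply: ler_wpM2l => //; rewrite subr_ge0 le1.
Qed.

Lemma sub_interior_Cphi :
  [set p | enorm p.2 < dotv lam p.1] `<=` interior (Cphi a d lam).
Proof.
rewrite -open_subsetE; last exact: open_enorm_lt_dotv.
by move=> p /ltW; apply: le_trans (phi_le_enorm ha hd hlam _).
Qed.

Lemma interior_Cphi_Sle0 : interior (Cphi a d lam) `&` Sle0 a d = set0.
Proof.
apply/seteqP; split => // -[x y] [Cxy Sxy].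
have : (x - e *: lam, y) @[e --> (0 : R)] --> (x - 0 *: lam, y).
  have x_cvg : (x - e *: lam) @[e --> (0 : R)] --> x - 0 *: lam.
    by apply: cvgB; [exact: cvg_cst | apply: cvgZr_tmp; exact: cvg_id].
  exact: (cvg_pair x_cvg (cvg_cst y)).
rewrite scale0r subr0 => /(_ _ Cxy) /nbhs_ballP [e /= e_gt0 He].
have /He : ball (0 : R) e (e / 2).
  by rewrite /ball /= sub0r normrN gtr0_norm ?divr_gt0 //; lra.
rewrite /Cphi /= dotvBr dotvZr -sqr_enorm hlam expr1n mulr1.
have := phi_ge ha hd hlam Sxy; lra.
Qed.

Lemma Cphi_maximal C : Sfree (Sle0 a d) C -> Cphi a d lam `<=` C -> C = Cphi a d lam.
Proof.
move=> [convC C_S] CphiC; apply/seteqP; split => [[x0 y0] Cx0|//].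
rewrite /Cphi /= leNgt; apply/negP => x0_lt.
have [xs [Sxs xsE]] := phi_attained ha hd hlam y0.
set D := dotv lam xs - dotv lam x0.
have D_gt0 : 0 < D by rewrite subr_gt0 xsE.
set T := 1 + `|enorm y0 - dotv lam x0| / D.
have T_ge1 : 1 <= T by rewrite lerDl divr_ge0 // ltW.
have T_gt0 : 0 < T by apply: lt_le_trans T_ge1.
set xc := x0 + T *: (xs - x0).
have C_xc : interior C (xc, y0).
  apply: interiorS CphiC _ _; apply: sub_interior_Cphi => /=.
  rewrite dotvDr dotvZr dotvBr -/D mulrDl mul1r divfK ?gt_eqF //.
  by have := ler_norm (enorm y0 - dotv lam x0); lra.
have T'_le1 : T^-1 <= 1 by rewrite invf_le1.
have := interior_convex_comb convC Cx0 C_xc _ T'_le1; rewrite invr_gt0 => /(_ T_gt0).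
have -> : T^-1 *: ((xc, y0) : 'rV[R]_n * 'rV[R]_m) + (1 - T^-1) *: (x0, y0) = (xs, y0).
  congr pair; last by rewrite -scalerDl addrC subrK scale1r.
  by apply/rowP => j; rewrite /xc !mxE; field; rewrite gt_eqF.
by move=> Cxs; have : (interior C `&` Sle0 a d) (xs, y0) by []; rewrite C_S.
Qed.

End MaximalSfree.

Theorem proposition6 (R : realType) (n m : nat) (hn : (1 <= n)%N) (hm : (1 <= m)%N)
  (a : 'rV[R]_n) (d : 'rV[R]_m) (ha : enorm a = 1) (hd : enorm d <= 1)
  (lam : 'rV[R]_n) (hlam : enorm lam = 1) :
  maxSfree (Sle0 a d) (Cphi a d lam) /\
  (forall (xb : 'rV[R]_n) (yb : 'rV[R]_m),
     ~ Sle0 a d (xb, yb) ->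
     dotv a xb + dotv d yb <= 0 ->
     lam = (enorm xb)^-1 *: xb ->
     interior (Cphi a d lam) (xb, yb)).
Proof.
split.
  split; first by split; [exact: Cphi_convex | exact: interior_Cphi_Sle0].
  exact: Cphi_maximal.
move=> xb yb notS Hxy lamE; apply: sub_interior_Cphi => //=.
have -> : dotv lam xb = enorm xb.
  rewrite lamE dotvZl -sqr_enorm expr2 mulrA.
  by have [->|xb0] := eqVneq (enorm xb) 0; [rewrite mulr0 | rewrite mulVf ?mul1r].
by rewrite ltNge; apply/negP => xb_le; apply: notS.
Qed.
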